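(* Let $X\sim\zeta$ be a random variable on a measurable space $\mathcal{X}$, let $\hat{\mathcal{X}}$ be a measurable space and $d:\mathcal{X}\times\hat{\mathcal{X}}\to\mathbb{R}$ a measurable distortion function. Let $\eta$ be a probability distribution on $\mathcal{X}$ (possibly different from $\zeta$), let $b\in(0,\infty]$ and define for $\lambda\in(-b,0]$ \[ \phi(\lambda)=\sup_{\hat x\in\hat{\mathcal{X}}}\log\mathbb{E}_{X\sim\eta}\big[e^{\lambda d(X,\hat x)}\big]. \] Then for every $r\ge 0$, \[ \inf_{P_{\hat X|X}:\ I(\hat X;X)\le r}\mathbb{E}\big[d(X,\hat X)\big]\ \ge\ \sup_{-b<\lambda<0}\left\{\frac1\lambda\big[r+D(\zeta\|\eta)\big]+\frac1\lambda\phi(\lambda)\right\}, \] where the infimum is over Markov kernels $P_{\hat X|X}$ from $\mathcal{X}$ to $\hat{\mathcal{X}}$ with $X\sim\zeta$.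
   Context: $D(\cdot\|\cdot)$ is the Kullback–Leibler divergence and $I(\cdot;\cdot)$ mutual information. Expectations $\mathbb{E}[d(X,\hat X)]$ are assumed well defined. *)

From HB Require Import structures.
From mathcomp Require Import all_boot all_order all_algebra.
From mathcomp Require Import all_classical all_reals all_analysis.
Set Implicit Arguments.
Unset Strict Implicit.
Unset Printing Implicit Defensive.
Import Order.TTheory GRing.Theory Num.Theory.
Local Open Scope classical_set_scope.
Local Open Scope ring_scope.
Local Open Scope ereal_scope.

Section rd_defs.
Context {R : realType}.

Definition eln (x : \bar R) : \bar R :=
  match x with
  | r%:E => if (0 < r)%R then (ln r)%:E else -oo
  | +oo => +oo
  | -oo => -oo
  end.

Definition is_density d (T : measurableType d) (P : set T -> \bar R)
    (Q : {measure set T -> \bar R}) (f : T -> R) : Prop :=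
  [/\ measurable_fun [set: T] f, (forall x, 0 <= f x)%R &
      forall A, measurable A -> P A = \int[Q]_(x in A) (f x)%:E].

(* Kullback-Leibler divergence D(P||Q) = E_Q[(dP/dQ) ln (dP/dQ)]
   = E_P[ln dP/dQ] if P << Q, and +oo otherwise (no density: inf of the
   empty set is +oo).  The value does not depend on the choice of the
   (a.e. unique) density. *)
Definition KL d (T : measurableType d) (P : set T -> \bar R)
    (Q : {measure set T -> \bar R}) : \bar R :=
  ereal_inf [set \int[Q]_x ((f x) * ln (f x))%:E | f in is_density P Q].

Section joint.
Context d1 d2 (X : measurableType d1) (Xh : measurableType d2).
Variables (zeta : probability X R) (K : R.-pker X ~> Xh).

Definition cst_unit : unit -> pprobability X R := fun _ => zeta.
Lemma measurable_cst_unit : measurable_fun setT cst_unit.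
Proof. exact: measurable_cst. Qed.
Definition cst_X : X -> pprobability X R := fun _ => zeta.
Lemma measurable_cst_X : measurable_fun setT cst_X.
Proof. exact: measurable_cst. Qed.

(* joint law P_{X Xh} of (X, Xh) when X ~ zeta and Xh | X ~ K:
   joint A = \int[zeta]_x K x (xsection A x) *)
Definition joint : {measure set (X * Xh) -> \bar R} :=
  mkproduct (kprobability measurable_cst_unit) (kernel.kernel_snd K) tt.

(* the kernel x |-> P_Xh (marginal law of Xh), constant in x *)
Definition marg_kernel := mkcomp_noparam (kprobability measurable_cst_X) K.

(* product P_X (x) P_Xh of the marginals:
   A |-> \int[zeta]_x P_Xh (xsection A x) *)
Definition prod_marg : {measure set (X * Xh) -> \bar R} :=
  mkproduct (kprobability measurable_cst_unit)
    (kernel.kernel_snd marg_kernel) tt.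

Definition mutual_info : \bar R := KL joint prod_marg.

Definition exp_dist (dist : X * Xh -> R) : \bar R :=
  \int[joint]_p (dist p)%:E.

(* E[dist(X, Xh)] is well defined (not of the form +oo - +oo) *)
Definition exp_dist_welldef (dist : X * Xh -> R) : Prop :=
  (\int[joint]_p (Num.max (dist p) 0%R)%:E < +oo) \/
  (\int[joint]_p (Num.max (- dist p) 0%R)%:E < +oo).
End joint.

Definition phi d1 d2 (X : measurableType d1) (Xh : measurableType d2)
    (eta : probability X R) (dist : X * Xh -> R) (lambda : R) : \bar R :=
  ereal_sup [set eln (\int[eta]_x (expR (lambda * dist (x, xh)))%:E)
            | xh in [set: Xh]].

End rd_defs.

(* Fix lambda < 0, a kernel K with I(Xh; X) <= r, densities f of the joint law
   P_{X Xh} with respect to P_X (x) P_Xh and g of zeta with respect to eta,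
   and c with E_eta[exp (lambda d(X, xh))] <= exp c for every xh.  Young's
   inequality a u <= a ln a - a + exp u, applied with a = f(x, xh) and
   u = lambda d(x, xh) - c - ln g(x) and integrated against P_X (x) P_Xh, gives
     lambda E[d(X, Xh)] <= \int f ln f + \int g ln g + c,
   because by Fubini the exponential term integrates to at most 1.  Taking
   the infimum over f, g and c yields
     lambda E[d] <= r + D(zeta||eta) + phi(lambda),
   and dividing by lambda < 0 reverses the inequality.  Since E[d] is only
   assumed to be well defined, every term is split into its positive and
   negative part before integrating; the negative parts of a ln a are at
   most 1. *)

From HB Require Import structures.
From mathcomp Require Import all_boot all_order all_algebra.
From mathcomp Require Import all_classical all_reals all_analysis.
From mathcomp Require Import measurable_realfun.
From mathcomp Require Import ring lra.
Set Implicit Arguments.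
Unset Strict Implicit.
Unset Printing Implicit Defensive.
Import Order.TTheory GRing.Theory Num.Theory.
Local Open Scope classical_set_scope.
Local Open Scope ring_scope.

Section real_inequalities.
Context {R : realType}.
Implicit Types a u x : R.

Lemma young_expR a u : 0 <= a -> a * u <= a * ln a - a + expR u.
Proof.
move=> a0; have [->|a_neq0] := eqVneq a 0.
  by rewrite !mul0r subr0 add0r expR_ge0.
have a_gt0 : 0 < a by rewrite lt_neqAle eq_sym a_neq0.
have expRu : expR u = a * expR (u - ln a).
  by rewrite expRD expRN lnK ?posrE// mulrCA divff ?mulr1// gt_eqF.
have : a * (1 + (u - ln a)) <= a * expR (u - ln a).
  by apply: ler_wpM2l; [exact: ltW|exact: expR_ge1Dx].
rewrite expRu; nra.
Qed.

Lemma xlnx_neg_le1 a : 0 <= a -> Num.max (- (a * ln a)) 0 <= 1.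
Proof.
move=> a0; have := young_expR 0 a0; rewrite mulr0 expR0 ge_max ler01 andbT.
lra.
Qed.

Lemma max0_sub x : x = Num.max x 0 - Num.max (- x) 0.
Proof. by have := congr1 (@^~ tt) (funrposBneg (fun _ : unit => x)). Qed.

Lemma max0_ge0 x : 0 <= Num.max x 0.
Proof. by rewrite le_max lexx orbT. Qed.

Lemma mulr_max0 a x : 0 <= a -> Num.max x 0 * a = Num.max (a * x) 0.
Proof. by move=> a0; rewrite /Num.max; case: ifPn => ?; case: ifPn => ?; nra. Qed.

(* both sides are sums of nonnegative terms, so that the inequality can be
   integrated term by term without any integrability assumption *)
Lemma young_expR_split a v c L : 0 <= a ->
  a * Num.max v 0 + Num.max (- (a * ln a)) 0 + a + a * Num.max (- L) 0
    + a * Num.max (- c) 0 <=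
  a * Num.max (- v) 0 + Num.max (a * ln a) 0 + a * Num.max L 0
    + a * Num.max c 0 + expR (v - c - L).
Proof.
move=> a0; have := young_expR (v - c - L) a0.
have -> : a * (v - c - L) = a * Num.max v 0 - a * Num.max (- v) 0
   - a * Num.max c 0 + a * Num.max (- c) 0 - a * Num.max L 0
   + a * Num.max (- L) 0.
  by rewrite {1}(max0_sub v) {1}(max0_sub c) {1}(max0_sub L); ring.
have := max0_sub (a * ln a); lra.
Qed.

End real_inequalities.

Local Open Scope ereal_scope.

Section ereal_algebra.
Context {R : realType}.

Lemma fin_num_le1 (x : \bar R) : 0 <= x -> x <= 1 -> x \is a fin_num.
Proof.
by move=> x0 x1; rewrite ge0_fin_numE// (le_lt_trans x1)// ltry.
Qed.

Lemma mulN_EFinB (k p : R) (n : \bar R) : (k < 0)%R -> 0 <= n ->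
  k%:E * (p%:E - n) = (- k)%:E * n - ((- k) * p)%:E.
Proof.
move=> k0; case: n => [n||] // _.
  by rewrite -!EFinM -!EFinB; congr (_%:E); ring.
by rewrite mulrNy mulry ltr0_sg// gtr0_sg ?oppr_gt0// mulN1e mul1e.
Qed.

Lemma lee_posneg_rearrange (a a' b b' l l' e : \bar R) (c : R) :
  0 <= a -> 0 <= b' -> 0 <= l' -> 0 <= e -> e <= 1 ->
  a' \is a fin_num -> b \is a fin_num -> l \is a fin_num ->
  a + b + 1 + l + (Num.max (- c) 0)%:E <=
    a' + b' + l' + (Num.max c 0)%:E + e ->
  a - a' <= (b' - b) + (l' - l) + c%:E.
Proof.
move=> a0 b'0 l'0 e0 e1 fa' fb fl.
rewrite -(fineK fa') -(fineK fb) -(fineK fl) -(fineK (fin_num_le1 e0 e1)).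
have e0' : (0 <= fine e)%R by rewrite fine_ge0.
have e1' : (fine e <= 1)%R by rewrite -lee_fin fineK// (fin_num_le1 e0 e1).
rewrite {3}(max0_sub c).
move: (fine a') (fine b) (fine l) (fine e) e0' e1' => ar' br lr er e0' e1'.
case: b' b'0 => [br'||] //= b'0; case: l' l'0 => [lr'||] //= l'0;
  case: a a0 => [ar||] //= a0; rewrite ?lee_fin.
- by move=> h; lra.
all: by move=> _; rewrite [X in _ <= X](_ : _ = +oo) ?leey.
Qed.

Lemma lee_expR_of_eln_le (x : \bar R) (c : R) : 0 <= x -> eln x <= c%:E ->
  x <= (expR c)%:E.
Proof.
case: x => [x||] //= _; case: ifPn => [x_gt0|x_le0] lnx_le; rewrite lee_fin.
- by rewrite -[leLHS](lnK (x:=x)) ?posrE// ler_expR -lee_fin.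
- by rewrite (le_trans _ (expR_ge0 c))// leNgt.
Qed.

(* k is an infimum (of entropies), so only its strict upper bounds k' are
   attained; ph is a supremum and is bounded by any c' above it *)
Lemma lee_mulVN_approx (lam r : R) (E k ph : \bar R) : (lam < 0)%R ->
  (forall k' c' eps : R, (0 < eps)%R -> k < k'%:E -> ph <= c'%:E ->
    lam%:E * E <= (r + eps + k' + c')%:E) ->
  (lam^-1)%:E * (r%:E + k) + (lam^-1)%:E * ph <= E.
Proof.
move=> lam_lt0 approx.
have lamV_lt0 : (lam^-1 < 0)%R by rewrite invr_lt0.
have lamVy : (lam^-1)%:E * +oo = -oo by rewrite mulry ltr0_sg// mulN1e.
have Ey : (forall M : R, lam%:E * E <= M%:E) -> E = +oo.
  case: E {approx} => [e||] // hM.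
    have := hM (lam * e - 1)%R; rewrite -EFinM lee_fin => lamE_le.
    by exfalso; clear -lamE_le; lra.
  by have := hM 0%R; rewrite mulrNy ltr0_sg// mulN1e leNgt ltry.
case: ph approx => [p||] approx; last first.
- case: k approx => [k||] approx.
  + rewrite (Ey _) ?leey// => M.
    have := approx (k + 1)%R (M - r - 1 - (k + 1))%R 1%R ltr01.
    rewrite lte_fin ltrDl ltr01 leNye => /(_ isT isT) /le_trans; apply.
    by rewrite lee_fin; lra.
  + by rewrite addey// lamVy addNye leNye.
  + rewrite (Ey _) ?leey// => M.
    have := approx (M - r - 1)%R 0%R 1%R ltr01.
    rewrite ltNye leNye => /(_ isT isT) /le_trans; apply.
    by rewrite lee_fin; lra.
- by rewrite lamVy addeNy leNye.
case: k approx => [k||] approx.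
- have lamE_le : lam%:E * E <= (r + k + p)%:E.
    apply/lee_addgt0Pr => e e_gt0.
    have := approx (k + e / 2)%R p (e / 2)%R; rewrite lte_fin ltrDl lexx.
    rewrite divr_gt0// => /(_ isT isT isT) /le_trans; apply.
    by rewrite -EFinD lee_fin; lra.
  case: E lamE_le {approx Ey} => [e||] //.
  + rewrite -EFinM -EFinD -mulrDr !lee_fin => lamE_le.
    have -> : e = (lam^-1 * (lam * e))%R by rewrite mulrA mulVf ?mul1r ?lt_eqF.
    by rewrite ler_wnM2l// ltW.
  + by rewrite leey.
  + by rewrite mulrNy ltr0_sg// mulN1e leNgt ltry.
- by rewrite addey// lamVy addNye leNye.
- rewrite (Ey _) ?leey// => M.
  have := approx (M - r - 1 - p)%R p 1%R ltr01; rewrite ltNye lexx.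
  move=> /(_ isT isT) /le_trans; apply.
  by rewrite lee_fin; lra.
Qed.

End ereal_algebra.

Section integral_density.
Context d (T : measurableType d) (R : realType).
Variables (mu nu : {measure set T -> \bar R}) (g : T -> R).
Hypothesis mg : measurable_fun setT g.
Hypothesis g_ge0 : forall x, (0 <= g x)%R.
Hypothesis nuE : forall A, measurable A -> nu A = \int[mu]_(x in A) (g x)%:E.

Import HBNNSimple.

(* approximate f by simple functions: the identity holds for indicators by
   nuE, hence for simple functions, and passes to the limit by monotone
   convergence on both sides *)
Lemma ge0_integral_density (f : T -> \bar R) : (forall x, 0 <= f x) ->
    measurable_fun setT f ->
  \int[mu]_x (f x * (g x)%:E) = \int[nu]_x f x.
Proof.
move=> f0 mf; set G := fun x => (g x)%:E.
have mG : measurable_fun setT G by exact/measurable_EFinP.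
have G0 x : 0 <= G x by rewrite lee_fin.
pose h := nnsfun_approx measurableT mf.
have -> : \int[nu]_x f x = lim (\int[nu]_x (EFin \o h n) x @[n --> \oo]).
  have fE x : f x = lim ((EFin \o h n) x @[n --> \oo]).
    by apply/esym/cvg_lim => //; exact: cvg_nnsfun_approx.
  under eq_integral => x _ do rewrite fE.
  apply: monotone_convergence => //.
  - move=> n; apply/measurable_EFinP.
    by apply: (measurable_funS measurableT) => //; exact/measurable_funP.
  - by move=> n x _ /=; rewrite lee_fin.
  - by move=> x _ a b ab; rewrite lee_fin; exact/lefP/nd_nnsfun_approx.
have -> : \int[mu]_x (f x * G x) =
    lim (\int[mu]_x ((EFin \o h n) x * G x) @[n --> \oo]).
  have fG x : f x * G x = lim (((EFin \o h n) \* G) x @[n --> \oo]).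
    apply/esym/cvg_lim => //; apply: cvgeZr => //.
    exact: cvg_nnsfun_approx.
  under eq_integral => x _ do rewrite fG.
  apply: monotone_convergence => //.
  - by move=> n; apply/emeasurable_funM => //; exact/measurable_EFinP.
  - by move=> n x _ /=; rewrite mule_ge0 ?lee_fin.
  - move=> x _ a b ab /=; rewrite lee_wpmul2r ?lee_fin//.
    exact/lefP/nd_nnsfun_approx.
suff simpleE n :
    \int[mu]_x ((EFin \o h n) x * G x) = \int[nu]_x (EFin \o h n) x.
  by under eq_fun do rewrite simpleE.
transitivity (\int[nu]_x
   (\sum_(y \in range (h n)) (y * \1_(h n @^-1` [set y]) x)%:E)); last first.
  by apply: eq_integral => t _; rewrite /= fimfunE -fsumEFin.
have mindic m r : measurable_fun setT
    (fun x => (r * \1_(h m @^-1` [set r]) x)%:E).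
  by apply: (measurable_comp measurableT) => //; exact: measurable_funM.
rewrite ge0_integral_fsum//; last by move=> m y _; exact: nnfun_muleindic_ge0.
transitivity (\int[mu]_x (\sum_(y \in range (h n))
    (y * \1_(h n @^-1` [set y]) x)%:E * G x)).
  under [RHS]eq_integral => x _.
    rewrite -ge0_mule_fsuml => [|y]; last exact: nnfun_muleindic_ge0.
    rewrite fsumEFin // -(fimfunE _ x); over.
  by [].
rewrite ge0_integral_fsum//; last 2 first.
  - by move=> y; apply: emeasurable_funM => //.
  - by move=> m y _; rewrite mule_ge0 ?nnfun_muleindic_ge0.
apply: eq_fsbigr => r rhn.
under [RHS]eq_integral do rewrite EFinM.
rewrite integralZl_indic_nnsfun => //.
under eq_integral do rewrite EFinM -muleA.
rewrite ge0_integralZl//.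
- under eq_integral do rewrite muleC.
  rewrite (eq_integral (G \_ (h n @^-1` [set r]))); last first.
    by move=> x _; rewrite epatch_indic.
  have mhr : measurable (h n @^-1` [set r]).
    by rewrite -[X in measurable X]setTI; exact: measurable_funP.
  by rewrite -integral_mkcondr setTI -nuE// integral_indic// setIT.
- by apply: emeasurable_funM => //; exact/measurable_EFinP.
- by move=> t _; rewrite mule_ge0 ?lee_fin.
- by move: rhn; rewrite inE => -[t _ <-]; rewrite lee_fin.
Qed.

End integral_density.

Section nonneg_integrals.
Context d (T : measurableType d) (R : realType).
Variable mu : {measure set T -> \bar R}.

Lemma ge0_integralD_EFin (a b : T -> R) :
  measurable_fun setT a -> measurable_fun setT b ->
  (forall x, 0 <= a x)%R -> (forall x, 0 <= b x)%R ->
  \int[mu]_x (a x + b x)%:E = \int[mu]_x (a x)%:E + \int[mu]_x (b x)%:E.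
Proof.
move=> ma mb a0 b0; under eq_integral do rewrite EFinD.
by rewrite ge0_integralD//; [move=> x _; rewrite lee_fin|exact/measurable_EFinP
  |move=> x _; rewrite lee_fin|exact/measurable_EFinP].
Qed.

Lemma ge0_integralD5_EFin (a b c e g : T -> R) :
  measurable_fun setT a -> measurable_fun setT b -> measurable_fun setT c ->
  measurable_fun setT e -> measurable_fun setT g ->
  (forall x, 0 <= a x)%R -> (forall x, 0 <= b x)%R -> (forall x, 0 <= c x)%R ->
  (forall x, 0 <= e x)%R -> (forall x, 0 <= g x)%R ->
  \int[mu]_x (a x + b x + c x + e x + g x)%:E = \int[mu]_x (a x)%:E +
    \int[mu]_x (b x)%:E + \int[mu]_x (c x)%:E + \int[mu]_x (e x)%:E +
    \int[mu]_x (g x)%:E.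
Proof.
move=> ma mb mc me mg a0 b0 c0 e0 g0.
rewrite (@ge0_integralD_EFin (fun x => a x + b x + c x + e x)%R g) //;
  last 2 first.
- by do 3 apply: measurable_funD => //.
- by move=> x; rewrite !addr_ge0.
rewrite (@ge0_integralD_EFin (fun x => a x + b x + c x)%R e) //; last 2 first.
- by do 2 apply: measurable_funD => //.
- by move=> x; rewrite !addr_ge0.
rewrite (@ge0_integralD_EFin (fun x => a x + b x)%R c) //; last 2 first.
- exact: measurable_funD.
- by move=> x; rewrite !addr_ge0.
by rewrite ge0_integralD_EFin.
Qed.

Lemma integral_le1 (h : T -> R) : mu setT <= 1 -> measurable_fun setT h ->
  (forall x, 0 <= h x <= 1)%R -> \int[mu]_x (h x)%:E <= 1.
Proof.
move=> mu1 mh h01; apply: (@le_trans _ _ (\int[mu]_x (cst 1 x))).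
  apply: ge0_le_integral => //.
  - by move=> x _; rewrite lee_fin; case/andP: (h01 x).
  - exact/measurable_EFinP.
  - by move=> x _; rewrite lee_fin; case/andP: (h01 x).
by rewrite integral_cst// mul1e.
Qed.

Lemma integral_posneg (h : T -> R) : \int[mu]_x (h x)%:E =
  \int[mu]_x (Num.max (h x) 0)%:E - \int[mu]_x (Num.max (- h x) 0)%:E.
Proof.
rewrite integralE; congr (_ - _); apply: eq_integral => x _.
  by rewrite (funerpos h).
by rewrite (funerneg h).
Qed.

End nonneg_integrals.

Section joint_law.
Context (R : realType) d1 d2 (X : measurableType d1) (Xh : measurableType d2).
Variables (zeta : probability X R) (K : R.-pker X ~> Xh).

Lemma joint_preimage_fst (A : set X) : measurable A ->
  joint zeta K (fst @^-1` A) = zeta A.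
Proof.
move=> mA; rewrite /joint /= /kproduct /= /cst_unit /kernel.intker_indic.
rewrite /kernel.kernel_snd /=.
transitivity (\int[zeta]_y (\1_A y)%:E); last by rewrite integral_indic// setIT.
apply: eq_integral => y _ /=.
rewrite (_ : (fun z => _) = cst (\1_A y)%:E); last first.
  by apply/funext => z; rewrite /indic.
by rewrite integral_cst// prob_kernel mule1.
Qed.

Lemma joint_setT : joint zeta K setT = 1.
Proof. by rewrite -(preimage_setT fst) joint_preimage_fst// probability_setT. Qed.

Lemma ge0_integral_joint_fst (h : X -> \bar R) : (forall x, 0 <= h x) ->
  measurable_fun setT h -> \int[joint zeta K]_p h p.1 = \int[zeta]_x h x.
Proof.
move=> h0 mh.
rewrite [RHS](eq_measure_integral (pushforward (joint zeta K) fst)); last first.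
  by move=> A mA _; rewrite /pushforward; exact/esym/joint_preimage_fst.
by rewrite (ge0_integral_pushforward measurable_fst)// preimage_setT.
Qed.

Variable x0 : X.

(* marg_kernel is constant, so its value at any point x0 is the law of Xh *)
Definition law_snd : set Xh -> \bar R := marg_kernel zeta K x0.
HB.instance Definition _ := Measure.on law_snd.

Lemma law_snd_setT_le1 : law_snd setT <= 1.
Proof. exact: sprob_kernel_le1. Qed.

Lemma law_snd_fin_num : fin_num_fun law_snd.
Proof.
move=> A mA; rewrite ge0_fin_numE// (le_lt_trans _ (ltry 1))//.
by rewrite (le_trans _ law_snd_setT_le1)// le_measure// inE.
Qed.

HB.instance Definition _ :=
  Measure_isFinite.Build _ _ _ law_snd law_snd_fin_num.

Lemma prod_margE (A : set (X * Xh)) : measurable A ->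
  prod_marg zeta K A = (zeta \x law_snd) A.
Proof.
move=> mA; rewrite /prod_marg /= /kproduct /= /cst_unit /kernel.intker_indic.
rewrite /kernel.kernel_snd /= /product_measure1 /=.
apply: eq_integral => y _ /=.
change (\int[law_snd]_z (\1_A (y, z))%:E = law_snd (xsection A y)).
rewrite (_ : (fun z => _) = fun z => (\1_(xsection A y) z)%:E).
  by rewrite integral_indic ?setIT//; exact: measurable_xsection.
apply/funext => z; rewrite /indic /xsection /=.
congr (_%:R%:E); congr (nat_of_bool _); apply/idP/idP.
  by move=> Ayz; apply/mem_set.
by move/set_mem.
Qed.

Lemma prod_marg_setT_le1 : prod_marg zeta K setT <= 1.
Proof.
rewrite prod_margE// -setXTT product_measure1E//.
by rewrite [X in X * _]probability_setT mul1e law_snd_setT_le1.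
Qed.

Lemma ge0_integral_prod_marg (F : X * Xh -> \bar R) : measurable_fun setT F ->
  (forall p, 0 <= F p) ->
  \int[prod_marg zeta K]_p F p = \int[zeta]_x \int[law_snd]_y F (x, y).
Proof.
move=> mF F0; rewrite (eq_measure_integral (zeta \x law_snd)).
  by rewrite fubini_tonelli1.
by move=> A mA _; exact: prod_margE.
Qed.

End joint_law.

Section densities.
Context (R : realType) d1 d2 (X : measurableType d1) (Xh : measurableType d2).
Variables (zeta eta : probability X R) (K : R.-pker X ~> Xh) (x0 : X).
Variables (dist : X * Xh -> R) (lam c : R) (f : X * Xh -> R) (g : X -> R).
Hypothesis mdist : measurable_fun setT dist.
Hypothesis lam_lt0 : (lam < 0)%R.
Hypothesis f_density : is_density (joint zeta K) (prod_marg zeta K) f.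
Hypothesis g_density : is_density zeta eta g.
Hypothesis expR_dist_le :
  forall y, \int[eta]_x (expR (lam * dist (x, y)))%:E <= (expR c)%:E.
Local Notation J := (joint zeta K).
Local Notation Pi := (prod_marg zeta K).
Local Notation Pm := (law_snd zeta K x0).

Let mf : measurable_fun setT f. Proof. by case: f_density. Qed.
Let f_ge0 p : (0 <= f p)%R. Proof. by case: f_density. Qed.
Let JE A : measurable A -> J A = \int[Pi]_(p in A) (f p)%:E.
Proof. by case: f_density => _ _; apply. Qed.
Let mg : measurable_fun setT g. Proof. by case: g_density. Qed.
Let g_ge0 x : (0 <= g x)%R. Proof. by case: g_density. Qed.
Let zetaE A : measurable A -> zeta A = \int[eta]_(x in A) (g x)%:E.
Proof. by case: g_density => _ _; apply. Qed.

Let mlam_dist : measurable_fun setT (fun p => lam * dist p)%R.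
Proof. exact: measurable_funM. Qed.
Let mln_g : measurable_fun setT (fun x => ln (g x)).
Proof. exact: measurableT_comp mg. Qed.
Let mexpR_dist : measurable_fun setT (fun p => (expR (lam * dist p - c))%:E).
Proof.
by apply/measurable_EFinP/measurableT_comp => //; exact: measurable_funB.
Qed.
Let expR_dist_ge0 p : 0 <= (expR (lam * dist p - c))%:E.
Proof. by rewrite lee_fin expR_ge0. Qed.

Lemma integral_law_snd_expR_dist_le1 :
  \int[eta]_x \int[Pm]_y (expR (lam * dist (x, y) - c))%:E <= 1.
Proof.
rewrite (fubini_tonelli (fun p => (expR (lam * dist p - c))%:E))//.
apply: (@le_trans _ _ (\int[Pm]_y (cst 1 y))); last first.
  by rewrite integral_cst// mul1e law_snd_setT_le1.
apply: ge0_le_integral => //.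
- by move=> y _; apply: integral_ge0.
- exact: (measurable_fun_fubini_tonelli_G _ mexpR_dist expR_dist_ge0).
- move=> y _; under eq_integral do rewrite expRD mulrC EFinM.
  have mexpR : measurable_fun setT (fun x => (expR (lam * dist (x, y)))%:E).
    exact/measurable_EFinP/measurableT_comp/(measurable_fun_pair1 y mlam_dist).
  rewrite (ge0_integralZl_EFin _ _ (fun x _ => _) mexpR) ?expR_ge0//.
  apply: (le_trans (lee_wpmul2l _ (expR_dist_le y))).
    by rewrite lee_fin expR_ge0.
  by rewrite -EFinM -expRD addNr expR0.
Qed.

(* integrating x against zeta = g eta, the factor expR (- ln (g x)) = 1 / g x
   cancels g x; where g x = 0 (and ln returns its junk value 0) the product
   vanishes, which only helps *)
Lemma integral_expR_young_le1 :
  \int[Pi]_p (expR (lam * dist p - c - ln (g p.1)))%:E <= 1.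
Proof.
set Q := fun x => \int[Pm]_y (expR (lam * dist (x, y) - c))%:E.
have mQ : measurable_fun setT Q.
  exact: (measurable_fun_fubini_tonelli_F _ mexpR_dist expR_dist_ge0).
have Q_ge0 x : 0 <= Q x by apply: integral_ge0.
have minvg : measurable_fun setT (fun x => (expR (- ln (g x)))%:E).
  exact/measurable_EFinP/measurableT_comp/measurable_funN.
rewrite (eq_integral (fun p => (expR (- ln (g p.1)))%:E *
    (expR (lam * dist p - c))%:E)); last first.
  by move=> p _; rewrite -EFinM -expRD; congr (expR _)%:E; ring.
rewrite (ge0_integral_prod_marg _ _ x0); last 2 first.
- by apply: emeasurable_funM => //; exact: measurableT_comp minvg _.
- by move=> p; rewrite mule_ge0// lee_fin expR_ge0.
under eq_integral => x _.
  rewrite /= (ge0_integralZl_EFin _ _ (fun y _ => expR_dist_ge0 (x, y))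
    (measurable_fun_pair2 x mexpR_dist)) ?expR_ge0// -/(Q x).
  over.
rewrite -(ge0_integral_density mg g_ge0 zetaE); last 2 first.
- by move=> x; rewrite mule_ge0// lee_fin expR_ge0.
- exact: emeasurable_funM.
apply: le_trans integral_law_snd_expR_dist_le1.
apply: ge0_le_integral => //.
- by move=> x _; rewrite !mule_ge0 ?lee_fin ?expR_ge0.
- apply: emeasurable_funM => //; first exact: emeasurable_funM.
  exact/measurable_EFinP.
move=> x _; rewrite muleAC -EFinM -[leRHS]mul1e lee_wpmul2r// lee_fin.
have [->|gx_neq0] := eqVneq (g x) 0%R; first by rewrite mulr0.
have gx_gt0 : (0 < g x)%R by rewrite lt_neqAle eq_sym gx_neq0 g_ge0.
by rewrite expRN lnK ?posrE// mulVf.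
Qed.

Lemma integral_density_joint (h : X * Xh -> R) : measurable_fun setT h ->
  (forall p, 0 <= h p)%R -> \int[Pi]_p (f p * h p)%:E = \int[J]_p (h p)%:E.
Proof.
move=> mh h0; under eq_integral do rewrite EFinM muleC.
apply: (ge0_integral_density mf f_ge0 JE); last exact/measurable_EFinP.
by move=> p; rewrite lee_fin.
Qed.

Lemma integral_density_fst (h : X -> R) : measurable_fun setT h ->
  (forall x, 0 <= h x)%R ->
  \int[Pi]_p (f p * h p.1)%:E = \int[eta]_x (g x * h x)%:E.
Proof.
move=> mh h0; rewrite (integral_density_joint (h:=fun p => h p.1)) //; last first.
  exact: measurableT_comp mh measurable_fst.
have hE_ge0 x : 0 <= (h x)%:E by rewrite lee_fin.
have mhE : measurable_fun setT (fun x => (h x)%:E) by exact/measurable_EFinP.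
rewrite (ge0_integral_joint_fst zeta K hE_ge0 mhE).
rewrite -(ge0_integral_density mg g_ge0 zetaE hE_ge0 mhE).
by apply: eq_integral => x _; rewrite EFinM muleC.
Qed.

Lemma integral_density_cst (k : R) : (0 <= k)%R ->
  \int[Pi]_p (f p * k)%:E = k%:E.
Proof.
move=> k0; rewrite integral_density_joint// integral_cst//.
by rewrite joint_setT mule1.
Qed.

Let integral_density_lam (h : X * Xh -> R) : measurable_fun setT h ->
  \int[Pi]_p (f p * Num.max (lam * h p) 0)%:E =
  (- lam)%:E * \int[J]_p (Num.max (- h p) 0)%:E.
Proof.
move=> mh; rewrite (integral_density_joint (h:=fun p => Num.max (lam * h p) 0)%R).
- rewrite -ge0_integralZl_EFin ?oppr_ge0 ?(ltW lam_lt0)//; last 2 first.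
  + by move=> p _; rewrite lee_fin max0_ge0.
  + exact/measurable_EFinP/measurable_funrneg.
  apply: eq_integral => p _; rewrite -EFinM; congr (_%:E).
  by rewrite [RHS]mulrC mulr_max0 ?oppr_ge0 ?ltW// mulrNN.
- exact/measurable_funrpos/measurable_funM.
- by move=> p; rewrite max0_ge0.
Qed.

Let integral_density_fst_max (h : X -> R) : measurable_fun setT h ->
  \int[Pi]_p (f p * Num.max (h p.1) 0)%:E =
  \int[eta]_x (Num.max (g x * h x) 0)%:E.
Proof.
move=> mh; rewrite (integral_density_fst (h:=fun x => Num.max (h x) 0)%R).
- apply: eq_integral => x _; congr (_%:E).
  by rewrite mulrC mulr_max0.
- exact/measurable_funrpos.
- by move=> x; rewrite max0_ge0.
Qed.

Let mflnf : measurable_fun setT (fun p => f p * ln (f p))%R.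
Proof. by apply: measurable_funM => //; exact: measurableT_comp. Qed.
Let mln_g1 : measurable_fun setT (fun p : X * Xh => ln (g p.1)).
Proof. exact: measurableT_comp mln_g measurable_fst. Qed.
Let mexpR_young :
  measurable_fun setT (fun p => expR (lam * dist p - c - ln (g p.1))).
Proof.
by apply/measurableT_comp/measurable_funB => //; exact: measurable_funB.
Qed.

Let integral_density_Nlam_dist :
  \int[Pi]_p (f p * Num.max (- (lam * dist p)) 0)%:E =
  (- lam)%:E * \int[J]_p (Num.max (dist p) 0)%:E.
Proof.
transitivity (\int[Pi]_p (f p * Num.max (lam * - dist p) 0)%:E).
  by under [RHS]eq_integral do rewrite mulrN.
rewrite (integral_density_lam (h:=fun p => - dist p)%R).
  by under eq_integral do rewrite opprK.
exact: measurable_funN.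
Qed.

Let integral_density_Nln_g :
  \int[Pi]_p (f p * Num.max (- ln (g p.1)) 0)%:E =
  \int[eta]_x (Num.max (- (g x * ln (g x))) 0)%:E.
Proof.
rewrite (integral_density_fst_max (h:=fun x => - ln (g x))%R).
  by under eq_integral do rewrite mulrN.
exact: measurable_funN.
Qed.

Lemma young_integrated :
  (- lam)%:E * \int[J]_p (Num.max (- dist p) 0)%:E
  + \int[Pi]_p (Num.max (- (f p * ln (f p))) 0)%:E + 1
  + \int[eta]_x (Num.max (- (g x * ln (g x))) 0)%:E + (Num.max (- c) 0)%:E <=
  (- lam)%:E * \int[J]_p (Num.max (dist p) 0)%:E
  + \int[Pi]_p (Num.max (f p * ln (f p)) 0)%:E
  + \int[eta]_x (Num.max (g x * ln (g x)) 0)%:E + (Num.max c 0)%:E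
  + \int[Pi]_p (expR (lam * dist p - c - ln (g p.1)))%:E.
Proof.
have mf_max (h : X * Xh -> R) : measurable_fun setT h ->
    measurable_fun setT (fun p => f p * Num.max (h p) 0)%R.
  by move=> mh; apply: measurable_funM => //; exact: measurable_funrpos.
have mmax (h : X * Xh -> R) : measurable_fun setT h ->
    measurable_fun setT (fun p => Num.max (h p) 0)%R.
  exact: measurable_funrpos.
(* young_expR_split at a = f p, v = lam * dist p, L = ln (g p.1), integrated
   term by term; the ten integrals are then identified one by one *)
have := @ge0_le_integral _ _ _ Pi setT measurableT
  (fun p => (f p * Num.max (lam * dist p) 0 + Num.max (- (f p * ln (f p))) 0
    + f p + f p * Num.max (- ln (g p.1)) 0 + f p * Num.max (- c) 0)%:E)
  (fun p => (f p * Num.max (- (lam * dist p)) 0 + Num.max (f p * ln (f p)) 0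
    + f p * Num.max (ln (g p.1)) 0 + f p * Num.max c 0
    + expR (lam * dist p - c - ln (g p.1)))%:E).
rewrite !ge0_integralD5_EFin.
rewrite (integral_density_lam mdist) integral_density_Nlam_dist.
rewrite integral_density_Nln_g.
rewrite (integral_density_fst_max mln_g) (integral_density_cst (max0_ge0 c)).
rewrite (integral_density_cst (max0_ge0 (- c))) -(JE measurableT) joint_setT.
apply.
all: try by move=> p _; rewrite lee_fin !addr_ge0 ?mulr_ge0 ?max0_ge0 ?expR_ge0.
all: try by move=> p _; rewrite lee_fin; exact: young_expR_split.
all: try by move=> p; rewrite ?mulr_ge0 ?max0_ge0 ?expR_ge0.
1,2: apply/measurable_EFinP; repeat apply: measurable_funD.
all: try exact: mf.
all: try exact: mexpR_young.
all: try exact: (mf_max _ mlam_dist).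
all: try exact: (mf_max _ (measurable_funN mlam_dist)).
all: try exact: (mf_max _ mln_g1).
all: try exact: (mf_max _ (measurable_funN mln_g1)).
all: try exact: (mf_max _ (measurable_cst c)).
all: try exact: (mf_max _ (measurable_cst (- c)%R)).
all: try exact: (mmax _ mflnf).
all: exact: (mmax _ (measurable_funN mflnf)).
Qed.

Lemma lam_exp_dist_le_entropies :
  \int[J]_p (Num.max (dist p) 0)%:E < +oo ->
  lam%:E * exp_dist zeta K dist <=
  \int[Pi]_p (f p * ln (f p))%:E + \int[eta]_x (g x * ln (g x))%:E + c%:E.
Proof.
move=> dist_pos_lt.
have max0E_ge0 (T : Type) (h : T -> R) t : 0 <= (Num.max (h t) 0)%:E.
  by rewrite lee_fin max0_ge0.
have dist_pos_fin : \int[J]_p (Num.max (dist p) 0)%:E \is a fin_num.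
  by rewrite ge0_fin_numE// integral_ge0.
have ent_neg_fin : \int[Pi]_p (Num.max (- (f p * ln (f p))) 0)%:E \is a fin_num.
  apply: fin_num_le1; first exact: integral_ge0.
  apply: integral_le1.
  - exact: prod_marg_setT_le1 x0.
  - exact/measurable_funrpos/measurable_funN.
  - by move=> p; rewrite max0_ge0 xlnx_neg_le1.
have ent_g_neg_fin :
    \int[eta]_x (Num.max (- (g x * ln (g x))) 0)%:E \is a fin_num.
  apply: fin_num_le1; first exact: integral_ge0.
  apply: integral_le1.
  - by rewrite le_eqVlt; apply/orP; left; apply/eqP; exact: probability_setT.
  - by apply/measurable_funrpos/measurable_funN/measurable_funM.
  - by move=> x; rewrite max0_ge0 xlnx_neg_le1.
rewrite /exp_dist integral_posneg -(fineK dist_pos_fin) mulN_EFinB//;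
  last exact: integral_ge0.
rewrite (EFinM (- lam)) (fineK dist_pos_fin).
rewrite (integral_posneg _ (fun p => f p * ln (f p))%R).
rewrite (integral_posneg _ (fun x => g x * ln (g x))%R).
apply: lee_posneg_rearrange young_integrated.
- by apply: mule_ge0; [rewrite lee_fin oppr_ge0 ltW|exact: integral_ge0].
- exact: integral_ge0.
- exact: integral_ge0.
- by apply: integral_ge0 => p _; rewrite lee_fin expR_ge0.
- exact: integral_expR_young_le1.
- by rewrite -(fineK dist_pos_fin) -EFinM.
- exact: ent_neg_fin.
- exact: ent_g_neg_fin.
Qed.

End densities.


Lemma probability_inhabited d (T : measurableType d) (R : realType)
    (P : probability T R) : [set: T] !=set0.
Proof.
apply/set0P/negP => /eqP T0; have := probability_setT P.
by rewrite T0 measure0 => /eqP; rewrite eq_sym onee_eq0.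
Qed.

Section rate_distortion.
Context (R : realType) d1 d2 (X : measurableType d1) (Xh : measurableType d2).
Variables (zeta eta : probability X R) (dist : X * Xh -> R).
Hypothesis mdist : measurable_fun setT dist.

Lemma exp_dist_pinfty (K : R.-pker X ~> Xh) :
  \int[joint zeta K]_p (Num.max (dist p) 0)%:E = +oo ->
  exp_dist_welldef zeta K dist -> exp_dist zeta K dist = +oo.
Proof.
move=> pos_inf [|neg_lt]; first by rewrite pos_inf ltxx.
have neg_fin : \int[joint zeta K]_p (Num.max (- dist p) 0)%:E \is a fin_num.
  by rewrite ge0_fin_numE// integral_ge0// => p _; rewrite lee_fin max0_ge0.
by rewrite /exp_dist integral_posneg pos_inf -(fineK neg_fin).
Qed.

Lemma lam_exp_dist_le_approx (K : R.-pker X ~> Xh) (x0 : X) (lam r eps k c : R) :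
  (lam < 0)%R -> (0 < eps)%R -> mutual_info zeta K <= r%:E ->
  KL zeta eta < k%:E -> phi eta dist lam <= c%:E ->
  \int[joint zeta K]_p (Num.max (dist p) 0)%:E < +oo ->
  lam%:E * exp_dist zeta K dist <= (r + eps + k + c)%:E.
Proof.
move=> lam_lt0 eps_gt0 I_le KL_lt phi_le dist_pos_lt.
have I_lt : mutual_info zeta K < (r + eps)%:E.
  by apply: le_lt_trans I_le _; rewrite lte_fin ltrDl.
have [_ [f f_density <-] ent_f_lt] := ereal_inf_lt I_lt.
have [_ [g g_density <-] ent_g_lt] := ereal_inf_lt KL_lt.
have expR_dist_le y :
    \int[eta]_x (expR (lam * dist (x, y)))%:E <= (expR c)%:E.
  apply: lee_expR_of_eln_le.
    by apply: integral_ge0 => x _; rewrite lee_fin expR_ge0.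
  by apply: le_trans phi_le; apply: ereal_sup_ubound; exists y.
apply: le_trans (lam_exp_dist_le_entropies x0 mdist lam_lt0 f_density
  g_density expR_dist_le dist_pos_lt) _.
by rewrite !EFinD; apply: leeD => //; apply: leeD; exact: ltW.
Qed.

End rate_distortion.

Theorem theorem3 (R : realType) (d1 d2 : measure_display)
    (X : measurableType d1) (Xh : measurableType d2)
    (zeta eta : probability X R) (dist : X * Xh -> R)
    (mdist : measurable_fun [set: X * Xh] dist)
    (b : \bar R) (b_gt0 : 0 < b) (r : R) (r_ge0 : (0 <= r)%R) :
  ereal_inf [set exp_dist zeta K dist
            | K in [set K : R.-pker X ~> Xh |
                    mutual_info zeta K <= r%:E /\ exp_dist_welldef zeta K dist]]
  >= ereal_sup [set (lambda^-1)%:E * (r%:E + KL zeta eta)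
                    + (lambda^-1)%:E * phi eta dist lambda
               | lambda in [set lambda : R | - b < lambda%:E /\ (lambda < 0)%R]].
Proof.
apply: ge_ereal_sup => _ [lam [_ lam_lt0] <-].
apply: le_ereal_inf_tmp => _ [K [I_le welldef] <-].
have [x0 _] := probability_inhabited zeta.
have [pos_inf|pos_fin] :=
  eqVneq (\int[joint zeta K]_p (Num.max (dist p) 0)%:E) +oo.
  by rewrite exp_dist_pinfty// leey.
apply: lee_mulVN_approx => // k c eps eps_gt0 KL_lt phi_le.
apply: (lam_exp_dist_le_approx mdist x0 lam_lt0 eps_gt0 I_le KL_lt phi_le).
by rewrite ltey.
Qed.
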